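(* Let $R$ be a ring and $T$ a $2$-tilting right $R$-module of projective dimension exactly $2$. Then $\operatorname{Gen}T\not\subseteq T^{\perp}$, and hence $T$ is not $\tau$-rigid.
   Context: A right $R$-module $T$ is $n$-tilting if $\operatorname{pd}T\le n$, $\operatorname{Ext}^i_R(T,T^{(\lambda)})=0$ for all $i>0$ and all cardinals $\lambda$, and there is an exact sequence $0\to R\to T_0\to\cdots\to T_n\to 0$ with each $T_i$ a direct summand of a direct sum of copies of $T$. $\operatorname{Gen}T$ is the class of epimorphic images of direct sums of copies of $T$; $T^{\perp}=\{M:\operatorname{Ext}^1_R(T,M)=0\}$. $T$ is $\tau$-rigid if there exists a projective presentation $P_1\xrightarrow{\varphi}P_0\to T\to 0$ such that $\operatorname{Hom}_R(\varphi,M)$ is surjective for every $M\in\operatorname{Gen}T$. *)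

(* Right R-modules are modelled as left modules over the
   converse ring R^c (an [lmodType R^c]); homomorphisms are functions
   satisfying [is_hom].  All homological notions are defined from scratch. *)
From HB Require Import structures.
From mathcomp Require Import all_boot all_order all_algebra.
Set Implicit Arguments. Unset Strict Implicit. Unset Printing Implicit Defensive.
Import GRing.Theory.
Local Open Scope ring_scope.

Section ModuleDefs.
Variable R : nzRingType.

Local Notation rmod := (lmodType R^c).

(* R as a right module over itself: x *: y = y * x in R *)
Definition RR : rmod := (R^c)^o.

Definition is_hom (M N : rmod) (f : M -> N) : Prop :=
  forall (a : R^c) (u v : M), f (a *: u + v) = a *: f u + f v.

Definition surj (M N : rmod) (f : M -> N) : Prop := forall y, exists x, f x = y.

Definition exact_at (M N P : rmod) (f : M -> N) (g : N -> P) : Prop :=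
  forall y, g y = 0 <-> exists x, y = f x.

Definition projective (P : rmod) : Prop :=
  forall (M N : rmod) (g : M -> N) (h : P -> N),
    is_hom g -> is_hom h -> surj g ->
    exists k : P -> M, is_hom k /\ forall x, g (k x) = h x.

(* ... -> P 2 --d 1--> P 1 --d 0--> P 0 --eps--> A -> 0 *)
Definition is_proj_resolution (A : rmod) (P : nat -> rmod)
    (d : forall n, P n.+1 -> P n) (eps : P 0 -> A) : Prop :=
  (forall n, projective (P n)) /\ (forall n, is_hom (d n)) /\ is_hom eps /\
  surj eps /\ exact_at (d 0) eps /\ (forall n, exact_at (d n.+1) (d n)).

(* Ext^{k+1}_R(A,B) = 0, computed from (any, equivalently every) projective
   resolution: every cocycle P_{k+1} -> B is a coboundary. *)
Definition Ext_succ_zero (k : nat) (A B : rmod) : Prop :=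
  forall (P : nat -> rmod) (d : forall n, P n.+1 -> P n) (eps : P 0 -> A),
    @is_proj_resolution A P d eps ->
    forall phi : P k.+1 -> B, is_hom phi -> (forall x, phi (d k.+1 x) = 0) ->
    exists psi : P k -> B, is_hom psi /\ forall x, phi x = psi (d k x).

Definition Ext_zero (i : nat) (A B : rmod) : Prop :=
  match i with
  | 0 => forall f : A -> B, is_hom f -> forall x, f x = 0
  | k.+1 => Ext_succ_zero k A B
  end.

Definition pd_le (A : rmod) (n : nat) : Prop :=
  exists (P : nat -> rmod) (d : forall n, P n.+1 -> P n) (eps : P 0 -> A),
    @is_proj_resolution A P d eps /\ forall m, (n < m)%N -> forall x : P m, x = 0.

Definition is_coprod_copies (T : rmod) (I : Type) (S : rmod) (inj : I -> T -> S) : Prop :=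
  (forall i, is_hom (inj i)) /\
  forall (N : rmod) (f : I -> T -> N), (forall i, is_hom (f i)) ->
    exists g : S -> N, [/\ is_hom g, (forall i x, g (inj i x) = f i x) &
      forall g' : S -> N, is_hom g' -> (forall i x, g' (inj i x) = f i x) ->
        forall y, g' y = g y].

Definition Add (T X : rmod) : Prop :=
  exists (I : Type) (S : rmod) (inj : I -> T -> S), @is_coprod_copies T I S inj /\
    exists (e : X -> S) (p : S -> X), [/\ is_hom e, is_hom p & forall x, p (e x) = x].

Definition Gen (T M : rmod) : Prop :=
  exists (I : Type) (S : rmod) (inj : I -> T -> S), @is_coprod_copies T I S inj /\
    exists p : S -> M, is_hom p /\ surj p.

(* image of the incoming map of 0 -> RR --iota--> Tm 0 --e 0--> Tm 1 --> ... *)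
Definition in_im (Tm : nat -> rmod) (iota : RR -> Tm 0)
    (e : forall k, Tm k -> Tm k.+1) (k : nat) : Tm k -> Prop :=
  match k return Tm k -> Prop with
  | 0 => fun y => exists r, y = iota r
  | k'.+1 => fun y => exists x, y = e k' x
  end.

Definition tilting (n : nat) (T : rmod) : Prop :=
  [/\ pd_le T n,
      (forall i, (0 < i)%N -> forall (I : Type) (S : rmod) (inj : I -> T -> S),
         @is_coprod_copies T I S inj -> Ext_zero i T S) &
      exists (Tm : nat -> rmod) (iota : RR -> Tm 0) (e : forall k, Tm k -> Tm k.+1),
        is_hom iota /\ injective iota /\ (forall k, is_hom (e k)) /\
        (forall k, (k <= n)%N -> Add T (Tm k)) /\
        (forall k, (k < n)%N -> forall y, e k y = 0 <-> in_im iota e y) /\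
        (forall y : Tm n, in_im iota e y)].

Definition in_perp (T M : rmod) : Prop := Ext_zero 1 T M.

Definition tau_rigid (T : rmod) : Prop :=
  exists (P1 P0 : rmod) (phi : P1 -> P0) (pi : P0 -> T),
    projective P1 /\ projective P0 /\ is_hom phi /\ is_hom pi /\ surj pi /\
    exact_at phi pi /\
    (forall M, Gen T M -> forall f : P1 -> M, is_hom f ->
       exists g : P0 -> M, is_hom g /\ forall x, f x = g (phi x)).

End ModuleDefs.

From HB Require Import structures.
From mathcomp Require Import all_boot all_order all_algebra.
From mathcomp Require Import finmap.
From mathcomp.multinomials Require Import monalg.
From Stdlib Require Import ClassicalEpsilon.
Set Implicit Arguments. Unset Strict Implicit. Unset Printing Implicit Defensive.
Import GRing.Theory.
Local Open Scope ring_scope.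

(* Let [0 -> P2 -> P1 -> P0 -> T -> 0] be a projective resolution and
   [0 -> R -> T0 -> T1 -> T2 -> 0] the tilting coresolution.  As [pd T <= 2],
   [Ext^2(T, -)] is right exact, so it vanishes on [Gen T].  If moreover
   [Gen T] lies in [T^perp], then for every set [K] the sequence
   [0 -> R^(K) -> T0^(K) -> C -> 0], with [C = Ker (T1^(K) -> T2^(K))] in
   [Gen T], shows [Ext^2(T, R^(K)) = 0].  Since [P2] is a quotient of a free
   module, [Ext^2(T, P2) = 0]: the map [P2 -> P1] splits, and
   [0 -> P1 -> P0 + P2 -> T -> 0] gives [pd T <= 1].  Finally, a tau-rigid
   presentation of [T] turns every 1-cocycle with values in [Gen T] into a
   coboundary, so tau-rigidity also forces [Gen T] into [T^perp]. *)

Section RightModules.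
Variable R : nzRingType.
Local Notation rmod := (lmodType R^c).
Implicit Types M N L : rmod.

Lemma hom0 M N (f : M -> N) : is_hom f -> f 0 = 0.
Proof.
move=> hf; have := hf 1 0 0; rewrite !scale1r !addr0 => h.
by apply: (addrI (f 0)); rewrite addr0 -h.
Qed.

Lemma homD M N (f : M -> N) : is_hom f -> forall u v, f (u + v) = f u + f v.
Proof. by move=> hf u v; have := hf 1 u v; rewrite !scale1r. Qed.

Lemma homZ M N (f : M -> N) : is_hom f -> forall a u, f (a *: u) = a *: f u.
Proof. by move=> hf a u; have := hf a u 0; rewrite addr0 (hom0 hf) addr0. Qed.

Lemma homB M N (f : M -> N) : is_hom f -> forall u v, f (u - v) = f u - f v.
Proof. by move=> hf u v; apply: (addIr (f v)); rewrite -(homD hf) !subrK. Qed.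

Lemma hom_sum M N (f : M -> N) (I : Type) (s : seq I) (F : I -> M) :
  is_hom f -> f (\sum_(i <- s) F i) = \sum_(i <- s) f (F i).
Proof.
move=> hf; elim: s => [|a s IH]; first by rewrite !big_nil (hom0 hf).
by rewrite !big_cons (homD hf) IH.
Qed.

Lemma hom_comp M N L (f : M -> N) (g : N -> L) :
  is_hom f -> is_hom g -> is_hom (fun x => g (f x)).
Proof. by move=> hf hg a u v; rewrite hf hg. Qed.

Lemma hom_sub M N (f g : M -> N) :
  is_hom f -> is_hom g -> is_hom (fun x => f x - g x).
Proof. by move=> hf hg a u v; rewrite hf hg scalerBr opprD addrACA. Qed.

Section Kernel.
Variables (M N : rmod) (f : M -> N).
Hypothesis hf : is_hom f.

Definition ker_pred := [pred x : M | f x == 0].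

Lemma ker_pred_submod_closed : subsemimod_closed ker_pred.
Proof.
split; first split.
- by rewrite inE (hom0 hf).
- by move=> u v; rewrite !inE (homD hf) => /eqP-> /eqP->; rewrite addr0.
- by move=> a u; rewrite !inE (homZ hf) => /eqP->; rewrite scaler0.
Qed.

HB.instance Definition _ :=
  GRing.isSubmodClosed.Build R^c M ker_pred ker_pred_submod_closed.
Record ker_type := Ker { ker_val : M; ker_valP : ker_val \in ker_pred }.
HB.instance Definition _ := [isSub for ker_val].
HB.instance Definition _ := [Choice of ker_type by <:].
HB.instance Definition _ := [SubChoice_isSubLmodule of ker_type by <:].

Definition kernel : rmod := ker_type.
End Kernel.

Lemma Gen_quotient (T M N : rmod) (q : M -> N) :
  is_hom q -> surj q -> Gen T M -> Gen T N.
Proof.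
move=> hq sq [I [S [inj [cp [p [hp sp]]]]]].
exists I, S, inj; split => //; exists (fun x => q (p x)); split.
  exact: hom_comp.
move=> y; have [m <-] := sq y; have [x <-] := sp m; by exists x.
Qed.

Section DirectSum.
Variable K : choiceType.

(* [dsum K M] is the direct sum [M^(K)], realised as finitely supported [K -> M]. *)
Definition dsum M := malg K M.
HB.instance Definition _ M := GRing.Zmodule.on (dsum M).

Definition dsum_scale M (c : R^c) (g : dsum M) : dsum M :=
  [malg k in msupp g => c *: g@_k].

Lemma dsum_scaleE M c (g : dsum M) k : (dsum_scale c g)@_k = c *: g@_k.
Proof. by rewrite mcoeffE; case: msuppP; rewrite ?scaler0. Qed.

Lemma dsum_scaleA M c1 c2 (g : dsum M) :
  dsum_scale c1 (dsum_scale c2 g) = dsum_scale (c1 * c2) g.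
Proof. by apply/malgP => k; rewrite !dsum_scaleE scalerA. Qed.

Lemma dsum_scale1 M (g : dsum M) : dsum_scale 1 g = g.
Proof. by apply/malgP => k; rewrite dsum_scaleE scale1r. Qed.

Lemma dsum_scaleDr M c (g1 g2 : dsum M) :
  dsum_scale c (g1 + g2) = dsum_scale c g1 + dsum_scale c g2.
Proof. by apply/malgP => k; rewrite !(mcoeffD, dsum_scaleE) scalerDr. Qed.

Lemma dsum_scaleDl M (g : dsum M) c1 c2 :
  dsum_scale (c1 + c2) g = dsum_scale c1 g + dsum_scale c2 g.
Proof. by apply/malgP => k; rewrite !(mcoeffD, dsum_scaleE) scalerDl. Qed.

HB.instance Definition _ M := GRing.Zmodule_isLmodule.Build R^c (dsum M)
  (@dsum_scaleA M) (@dsum_scale1 M) (@dsum_scaleDr M) (@dsum_scaleDl M).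

Definition dsum_map M N (f : M -> N) (g : dsum M) : dsum N :=
  [malg k in msupp g => f g@_k].

Lemma dsum_mapE M N (f : M -> N) g k : f 0 = 0 -> (dsum_map f g)@_k = f g@_k.
Proof. by move=> f0; rewrite mcoeffE; case: msuppP. Qed.

Lemma dsum_map_hom M N (f : M -> N) : is_hom f -> is_hom (dsum_map f).
Proof.
move=> hf a u v; apply/malgP => k.
by rewrite mcoeffD dsum_scaleE !dsum_mapE ?(hom0 hf) // mcoeffD dsum_scaleE hf.
Qed.

Definition dsum_in M (k : K) (m : M) : dsum M := << m *g k >>.

Lemma dsum_in_hom M k : is_hom (@dsum_in M k).
Proof.
move=> a u v; apply/malgP => k'.
by rewrite mcoeffD dsum_scaleE !mcoeffU mulrnDl scalerMnr.
Qed.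

Definition dsum_case M N (g : K -> M -> N) (x : dsum M) : N :=
  \sum_(k <- msupp x) g k x@_k.

Lemma dsum_caseEw M N (g : K -> M -> N) (x : dsum M) (D : {fset K}) :
  (forall k, g k 0 = 0) -> (msupp x `<=` D)%fset ->
  dsum_case g x = \sum_(k <- D) g k x@_k.
Proof. by move=> g0 le; apply: big_fset_incl => // k _ /mcoeff_outdom ->. Qed.

Lemma dsum_case_hom M N (g : K -> M -> N) :
  (forall k, is_hom (g k)) -> is_hom (dsum_case g).
Proof.
move=> hg a u v; have g0 k : g k 0 = 0 by apply: hom0.
pose D := (msupp u `|` msupp v `|` msupp (a *: u + v))%fset.
have [uD vD wD] : [/\ msupp u `<=` D, msupp v `<=` D & msupp (a *: u + v) `<=` D]%fset.
  by split; apply/fsubsetP => k kx; rewrite !inE kx ?orbT.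
rewrite (dsum_caseEw g0 wD) (dsum_caseEw g0 uD) (dsum_caseEw g0 vD).
rewrite scaler_sumr -big_split /=; apply: eq_bigr => k _.
by rewrite mcoeffD dsum_scaleE hg.
Qed.

Lemma dsum_case_in M N (g : K -> M -> N) k m :
  (forall k, g k 0 = 0) -> dsum_case g (dsum_in k m) = g k m.
Proof.
move=> g0; rewrite (dsum_caseEw g0 msuppU_le).
by rewrite big_seq_fset1 mcoeffUU.
Qed.

Lemma dsum_case_uniq M N (g : K -> M -> N) (h : dsum M -> N) :
  is_hom h -> (forall k m, h (dsum_in k m) = g k m) -> forall x, h x = dsum_case g x.
Proof.
move=> hh hin x; rewrite {1}(monalgE x) (hom_sum _ _ hh).
by apply: eq_bigr => k _; rewrite -hin.
Qed.

Lemma dsum_map_lift M N (f : M -> N) (y : dsum N) :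
  is_hom f -> (forall k, exists m, y@_k = f m) -> exists x, y = dsum_map f x.
Proof.
move=> hf hy.
pose pre k := epsilon (inhabits 0) (fun m => y@_k = f m).
exists [malg k in msupp y => pre k]; apply/malgP => k.
rewrite dsum_mapE ?(hom0 hf) // mcoeffE.
case: msuppP => _; last by rewrite (hom0 hf).
exact: epsilon_spec (hy k).
Qed.

Lemma dsum_map_surj M N (f : M -> N) : is_hom f -> surj f -> surj (dsum_map f).
Proof.
move=> hf sf y; have [x ->] : exists x, y = dsum_map f x.
  by apply: dsum_map_lift => // k; have [m <-] := sf y@_k; exists m.
by exists x.
Qed.

Lemma dsum_map_inj M N (f : M -> N) :
  is_hom f -> injective f -> injective (dsum_map f).
Proof.
move=> hf fi x y exy; apply/malgP => k; apply: fi.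
by rewrite -!(dsum_mapE _ _ (hom0 hf)) exy.
Qed.

Lemma dsum_map_exact M N L (f : M -> N) (g : N -> L) :
  is_hom f -> is_hom g -> exact_at f g -> exact_at (dsum_map f) (dsum_map g).
Proof.
move=> hf hg ex y; split.
- move=> gy0; apply: dsum_map_lift => // k; apply/ex.
  by rewrite -(dsum_mapE _ _ (hom0 hg)) gy0 mcoeff0.
- case=> x ->; apply/malgP => k.
  rewrite mcoeff0 !dsum_mapE ?(hom0 hf) ?(hom0 hg) //.
  by apply/ex; exists x@_k.
Qed.

Lemma dsum_coprod_copies (T S : rmod) (I : Type) (inj : I -> T -> S) :
  is_coprod_copies inj ->
  is_coprod_copies (fun ki : K * I => fun t => dsum_in ki.1 (inj ki.2 t)).
Proof.
case=> hinj univ; split=> [[k i]|N f hf]; first exact/hom_comp/dsum_in_hom.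
pose Univ k (g : S -> N) := [/\ is_hom g, (forall i x, g (inj i x) = f (k, i) x) &
  forall g' : S -> N, is_hom g' -> (forall i x, g' (inj i x) = f (k, i) x) ->
    forall y, g' y = g y].
have [gk gkP] : exists gk : K -> S -> N, forall k, Univ k (gk k).
  exists (fun k => epsilon (inhabits (fun=> 0 : N)) (Univ k)) => k.
  apply: epsilon_spec; apply: (univ N (fun i => f (k, i))) => i; exact: hf.
have hgk k : is_hom (gk k) by case: (gkP k).
have gk0 k : gk k 0 = 0 by apply: hom0.
exists (dsum_case gk); split.
- exact: dsum_case_hom.
- by case=> k i x /=; rewrite dsum_case_in //; case: (gkP k).
- move=> g' hg' hg'f; apply: dsum_case_uniq => // k m.
  case: (gkP k) => _ _ gk_uniq; apply: (gk_uniq (fun y => g' (dsum_in k y))).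
    exact/hom_comp/hg'/dsum_in_hom.
  by move=> i x; apply: (hg'f (k, i)).
Qed.

Lemma Gen_dsum_Add (T X : rmod) : Add T X -> Gen T (dsum X).
Proof.
case=> I [S [inj [cp [e [p [he hp pe]]]]]].
exists (K * I)%type, (dsum S), (fun ki t => dsum_in ki.1 (inj ki.2 t)).
split; first exact: dsum_coprod_copies.
exists (dsum_map p); split; first exact: dsum_map_hom.
by apply: dsum_map_surj => // x; exists (e x).
Qed.
End DirectSum.

Lemma free_cover M : exists pi : dsum M (RR R) -> M, is_hom pi /\ surj pi.
Proof.
pose g (k : M) (c : RR R) : M := (c : R^c) *: k.
have hg k : is_hom (g k) by move=> a u v; rewrite /g scalerDl scalerA.
exists (dsum_case g); split; first exact: dsum_case_hom.
move=> y; exists (dsum_in y (1 : RR R)).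
by rewrite dsum_case_in => [|k]; rewrite /g ?scale1r ?scale0r.
Qed.

Definition zero_module : rmod := 'rV[R^c]_0.

Lemma projective_zero : projective zero_module.
Proof.
move=> M N g h hg hh _; exists (fun=> 0); split.
  by move=> a u v; rewrite scaler0 addr0.
by move=> x; rewrite thinmx0 (hom0 hg) (hom0 hh).
Qed.

Lemma projective_prod (A B : rmod) :
  projective A -> projective B -> projective (A * B)%type.
Proof.
move=> pA pB M N g h hg hh sg.
have hA : is_hom (fun a : A => h (a, 0)).
  by move=> c u v; rewrite -hh; congr h; congr pair; rewrite /= scaler0 addr0.
have hB : is_hom (fun b : B => h (0, b)).
  by move=> c u v; rewrite -hh; congr h; congr pair; rewrite /= scaler0 addr0.
have [kA [hkA HA]] := pA M N g _ hg hA sg.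
have [kB [hkB HB]] := pB M N g _ hg hB sg.
exists (fun x => kA x.1 + kB x.2); split.
  by move=> c u v /=; rewrite hkA hkB scalerDr addrACA.
by case=> a b /=; rewrite (homD hg) HA HB -(homD hh); congr h; congr pair;
  rewrite /= ?addr0 ?add0r.
Qed.

Section Resolution.
(* Otherwise the index [n] of [d n] would be implicit. *)
Local Unset Implicit Arguments.
Variables (T : rmod) (P : nat -> rmod) (d : forall n, P n.+1 -> P n) (eps : P 0 -> T).
Hypothesis hres : is_proj_resolution d eps.

Lemma res_projective n : projective (P n). Proof. by case: hres. Qed.
Lemma res_hom n : is_hom (d n). Proof. by case: hres => _ []. Qed.
Lemma res_eps_hom : is_hom eps. Proof. by case: hres => _ [_ []]. Qed.
Lemma res_eps_surj : surj eps. Proof. by case: hres => _ [_ [_ []]]. Qed.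
Lemma res_exact0 : exact_at (d 0) eps. Proof. by case: hres => _ [_ [_ [_ []]]]. Qed.
Lemma res_exact n : exact_at (d n.+1) (d n). Proof. by case: hres => _ [_ [_ [_ []]]]. Qed.

Lemma res_d0d1 x : d 0 (d 1 x) = 0. Proof. by apply/(res_exact 0); exists x. Qed.
Lemma res_eps_d0 x : eps (d 0 x) = 0. Proof. by apply/res_exact0; exists x. Qed.

Definition ext1_vanishes (N : rmod) :=
  forall phi : P 1 -> N, is_hom phi -> (forall x, phi (d 1 x) = 0) ->
  exists psi : P 0 -> N, is_hom psi /\ forall x, phi x = psi (d 0 x).

(* This is [Ext^2(T, N) = 0] only when [P 3 = 0]: there is no cocycle condition. *)
Definition ext2_vanishes (N : rmod) :=
  forall phi : P 2 -> N, is_hom phi ->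
  exists psi : P 1 -> N, is_hom psi /\ forall x, phi x = psi (d 1 x).

Lemma ext1_vanishes_of_perp N : in_perp T N -> ext1_vanishes N.
Proof. by move=> perpN; apply: perpN hres. Qed.

Lemma ext2_vanishes_quotient (S N : rmod) (q : S -> N) :
  is_hom q -> surj q -> ext2_vanishes S -> ext2_vanishes N.
Proof.
move=> hq sq ext2S phi hphi.
have [k [hk qk]] := res_projective 2 _ _ q phi hq hphi sq.
have [psi [hpsi kE]] := ext2S k hk.
exists (fun x => q (psi x)); split; first exact: hom_comp.
by move=> x; rewrite -kE qk.
Qed.

Lemma ext2_vanishes_shift (N B C : rmod) (i : N -> B) (q : B -> C) :
  is_hom i -> is_hom q -> injective i -> surj q -> exact_at i q ->
  ext2_vanishes B -> ext1_vanishes C -> ext2_vanishes N.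
Proof.
move=> hi hq i_inj sq exiq ext2B ext1C phi hphi.
have [psi [hpsi iphiE]] := ext2B (fun x => i (phi x)) (hom_comp hphi hi).
have [chi [hchi qpsiE]] : exists chi : P 0 -> C,
    is_hom chi /\ forall x, q (psi x) = chi (d 0 x).
  apply: ext1C; first exact: hom_comp.
  by move=> x; rewrite -iphiE; apply/exiq; exists (phi x).
have [chi' [hchi' qchi']] := res_projective 0 _ _ q chi hq hchi sq.
pose rho x := psi x - chi' (d 0 x).
have hrho : is_hom rho by apply: hom_sub; last apply: hom_comp (res_hom 0) hchi'.
have rho_im x : exists n, rho x = i n.
  by apply/exiq; rewrite /rho (homB hq) qchi' -qpsiE subrr.
pose psi' x := epsilon (inhabits 0) (fun n => rho x = i n).
have psi'E x : rho x = i (psi' x) := epsilon_spec _ _ (rho_im x).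
exists psi'; split.
  by move=> a u v; apply: i_inj; rewrite hi -!psi'E hrho.
by move=> x; apply: i_inj; rewrite -psi'E /rho res_d0d1 (hom0 hchi') subr0 -iphiE.
Qed.

Section Cocycle.
Variables (M : rmod) (f : P 1 -> M).
Hypotheses (hf : is_hom f) (f_cocycle : forall x, f (d 1 x) = 0).

Lemma cocycle_factor (A : rmod) (h : A -> P 0) :
  is_hom h -> (forall y, eps (h y) = 0) ->
  exists g : A -> M, is_hom g /\ forall y x, h y = d 0 x -> g y = f x.
Proof.
move=> hh h_ker.
have f_wd x x' : d 0 x = d 0 x' -> f x = f x'.
  move=> dxx'; apply/eqP; rewrite -subr_eq0 -(homB hf).
  have [z ->] : exists z, x - x' = d 1 z.
    by apply/res_exact; rewrite (homB (res_hom 0)) dxx' subrr.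
  by rewrite f_cocycle.
have pre y : exists x, h y = d 0 x by apply/res_exact0.
pose g y := f (epsilon (inhabits 0) (fun x => h y = d 0 x)).
have gE y x : h y = d 0 x -> g y = f x.
  by move=> hyx; apply: f_wd; rewrite -(epsilon_spec _ _ (pre y)).
exists g; split => // a u v.
have [xu hu] := pre u; have [xv hv] := pre v.
rewrite (gE u xu hu) (gE v xv hv) -hf; apply: gE.
by rewrite hh hu hv (res_hom 0).
Qed.
End Cocycle.

(* Compare the resolution with the presentation [P1 -> P0 -> T] in both
   directions; tau-rigidity then extends the induced map on [P1] over [phi]. *)
Lemma tau_rigid_ext1_vanishes M : tau_rigid T -> Gen T M -> ext1_vanishes M.
Proof.
case=> P1 [P0 [phi [pi [_ [projP0 [hphi [hpi [spi [ex_phi tau]]]]]]]]] genM f hf fcoc.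
have [a [ha piaE]] := res_projective 0 _ _ pi eps hpi res_eps_hom spi.
have [b [hb epsbE]] := projP0 _ _ eps pi res_eps_hom hpi res_eps_surj.
have [F [hF FE]] : exists F : P1 -> M,
    is_hom F /\ forall y x, b (phi y) = d 0 x -> F y = f x.
  apply: cocycle_factor (hom_comp hphi hb) _ => // y.
  by rewrite epsbE; apply/ex_phi; exists y.
have [g [hg FgE]] := tau M genM F hF.
have [G [hG GE]] : exists G : P 0 -> M, is_hom G /\
    forall z x, b (a z) - z = d 0 x -> G z = f x.
  apply: cocycle_factor (hom_sub (hom_comp ha hb) (fun _ _ _ => erefl)) _ => // z.
  by rewrite (homB res_eps_hom) epsbE piaE subrr.
exists (fun z => g (a z) - G z); split; first exact: hom_sub (hom_comp ha hg) hG.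
move=> x.
have [y ady] : exists y, a (d 0 x) = phi y by apply/ex_phi; rewrite piaE res_eps_d0.
have [x1 bdx1] : exists x1, b (phi y) = d 0 x1.
  by apply/res_exact0; rewrite epsbE; apply/ex_phi; exists y.
rewrite ady -FgE (FE _ _ bdx1) (GE _ (x1 - x)); last by rewrite ady bdx1 (homB (res_hom 0)).
by rewrite (homB hf) opprB addrC subrK.
Qed.

Section Retraction.
Variable r : P 1 -> P 2.
Hypotheses (hr : is_hom r) (rK : forall x, r (d 1 x) = x).

(* [0 -> P 1 --(d 0, r)--> P 0 * P 2 --eps \o fst--> T -> 0] *)
Definition split_res (n : nat) : rmod :=
  match n with 0 => (P 0 * P 2)%type | 1 => P 1 | _ => zero_module end.

Definition split_res_d n : split_res n.+1 -> split_res n :=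
  match n with
  | 0 => fun x : P 1 => ((d 0 x, r x) : split_res 0)
  | _.+1 => fun=> 0
  end.

Lemma pd_le1_of_retraction : pd_le T 1.
Proof.
exists split_res, split_res_d, (fun x => eps x.1); split; last first.
  by case=> [|[|m]] //= _ x; apply: thinmx0.
split.
  case=> [|[|n]] /=; last exact: projective_zero.
    exact/projective_prod/res_projective/res_projective.
  exact: res_projective.
split.
  case=> [a u v|n a u v] /=; last by rewrite scaler0 addr0.
  by rewrite (res_hom 0) hr.
split; first by move=> a u v; apply: res_eps_hom.
split; first by move=> y; have [x <-] := res_eps_surj y; exists (x, 0).
split.
  case=> p q /=; split; last by case=> x [-> _]; apply: res_eps_d0.
  move/res_exact0 => [x ->]; exists (x - d 1 (r x) + d 1 q) => /=.
  rewrite (homD (res_hom 0)) (homB (res_hom 0)) !res_d0d1 subr0 addr0.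
  by rewrite (homD hr) (homB hr) !rK subrr add0r.
case=> [|n] y /=; last by split => // _; exists 0; apply: thinmx0.
split; last by case=> x -> /=; rewrite (hom0 (res_hom 0)) (hom0 hr).
case/pair_equal_spec => /(res_exact 0) [z ->]; rewrite rK => ->.
by exists 0; rewrite (hom0 (res_hom 1)).
Qed.
End Retraction.

Section LengthTwo.
Hypothesis P_vanish : forall m, (2 < m)%N -> forall x : P m, x = 0.

Lemma ext2_vanishes_of_Ext N : Ext_zero 2 T N -> ext2_vanishes N.
Proof.
move=> ext2N phi hphi; apply: (ext2N P d eps hres phi hphi) => x.
by rewrite (P_vanish 3 isT x) (hom0 (res_hom 2)) (hom0 hphi).
Qed.

Lemma ext2_vanishes_Gen N :
  (forall I (S : rmod) (inj : I -> T -> S), is_coprod_copies inj -> Ext_zero 2 T S) ->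
  Gen T N -> ext2_vanishes N.
Proof.
move=> ext2_sums [I [S [inj [cp [p [hp sp]]]]]].
exact/(ext2_vanishes_quotient _ _ _ hp sp)/ext2_vanishes_of_Ext/ext2_sums/cp.
Qed.

Lemma ext2_vanishes_free (K : choiceType) :
  tilting 2 T -> (forall M, Gen T M -> in_perp T M) -> ext2_vanishes (dsum K (RR R)).
Proof.
case=> _ ext2_sums [Tm [iota [e [hiota [iota_inj [he [addT [exT _]]]]]]]] hperp.
have he1 : is_hom (dsum_map (K := K) (e 1)) := dsum_map_hom (he 1).
have ex_e0 := dsum_map_exact (K := K) (he 0) (he 1) (exT 1 isT).
have e0_ker (x : dsum K (Tm 0)) : dsum_map (e 0) x \in ker_pred (dsum_map (e 1)).
  by rewrite inE; apply/eqP/ex_e0; exists x.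
pose q x : kernel he1 := Ker (e0_ker x).
have hq : is_hom q by move=> a u v; apply: val_inj; rewrite /= (dsum_map_hom (he 0)).
have sq : surj q.
  case=> y y_ker; have /eqP/ex_e0 [x yE] := y_ker.
  by exists x; apply: val_inj; rewrite /= yE.
have ex_q : exact_at (dsum_map iota) q.
  move=> y; rewrite -(dsum_map_exact hiota (he 0) (exT 0 isT)).
  by split => [/(congr1 val)|e0y]; last apply: val_inj.
apply: (ext2_vanishes_shift _ _ _ _ _ (dsum_map_hom hiota) hq
  (dsum_map_inj hiota iota_inj) sq ex_q).
  exact/(ext2_vanishes_Gen _ (ext2_sums 2 isT))/Gen_dsum_Add/addT.
exact/(ext1_vanishes_of_perp _)/hperp/(Gen_quotient hq sq)/Gen_dsum_Add/addT.
Qed.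
End LengthTwo.
End Resolution.
End RightModules.

Lemma tilting2_pd_le1 (R : nzRingType) (T : lmodType R^c) :
  tilting 2 T -> (forall M, Gen T M -> in_perp T M) -> pd_le T 1.
Proof.
move=> tiltT perpT; have [[P [d [eps [hres P_vanish]]]] _ _] := tiltT.
have [pi [hpi spi]] := free_cover (P 2).
have ext2_P2 : ext2_vanishes _ P d (P 2).
  apply: (ext2_vanishes_quotient _ _ _ _ _ hres _ _ _ hpi spi).
  exact: ext2_vanishes_free _ _ _ _ _ hres P_vanish _ tiltT perpT.
have [r [hr rK]] := ext2_P2 id (fun _ _ _ => erefl).
exact: (pd_le1_of_retraction _ _ _ _ _ hres r hr (fun x => esym (rK x))).
Qed.

Lemma tau_rigid_Gen_perp (R : nzRingType) (T : lmodType R^c) :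
  tau_rigid T -> forall M, Gen T M -> in_perp T M.
Proof.
by move=> tauT M genM P d eps hres; exact: tau_rigid_ext1_vanishes _ _ P d eps hres M tauT genM.
Qed.

Theorem corollary5p10 (R : nzRingType) (T : lmodType R^c) :
  tilting 2 T -> ~ pd_le T 1 ->
  ~ (forall M : lmodType R^c, Gen T M -> in_perp T M) /\ ~ tau_rigid T.
Proof.
move=> tiltT not_pd1; have perp_pd1 := tilting2_pd_le1 tiltT.
by split=> [/perp_pd1 | /tau_rigid_Gen_perp /perp_pd1].
Qed.
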